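(* Let $a\ge b\gg1$. Define \[ E_<:=\Big\{(x,y)\in\mathbb{R}^2:\tfrac{x^2}{a^2}+\tfrac{y^2}{b^2}\le1\Big\},\qquad E_>:=\Big\{(x,y)\in\mathbb{R}^2:\tfrac{x^2}{(a+100\frac ab)^2}+\tfrac{y^2}{(b+100)^2}\ge1\Big\}. \] Then no square of side length $1$ in $\mathbb{R}^2$ intersects both $E_<$ and $E_>$. The same holds with $E_<,E_>$ replaced by \[ E'_<:=\Big\{(x,y):\tfrac{x^2}{(a-100\frac ab)^2}+\tfrac{y^2}{(b-100)^2}\le1\Big\},\qquad E'_>:=\Big\{(x,y):\tfrac{x^2}{a^2}+\tfrac{y^2}{b^2}\ge1\Big\}. \]
   Context: ''$b\gg1$'' means $b\ge C$ for a sufficiently large absolute constant $C$. *)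

From Stdlib Require Export Reals.
Open Scope R_scope.

Definition ellipse_le (A B x y : R) : Prop :=
  x ^ 2 / A ^ 2 + y ^ 2 / B ^ 2 <= 1.

Definition ellipse_ge (A B x y : R) : Prop :=
  x ^ 2 / A ^ 2 + y ^ 2 / B ^ 2 >= 1.

(* Q is a (closed, filled) square of side length 1 in R^2, in arbitrary
   position and orientation: Q = { c + s*u + t*u^perp : s, t in [0,1] }
   with u = (u1, u2) a unit vector and u^perp = (-u2, u1). *)
Definition is_unit_square (Q : R -> R -> Prop) : Prop :=
  exists x0 y0 u1 u2 : R,
    u1 ^ 2 + u2 ^ 2 = 1 /\
    forall x y : R,
      Q x y <-> exists s t : R, 0 <= s <= 1 /\ 0 <= t <= 1 /\
                 x = x0 + s * u1 - t * u2 /\ y = y0 + s * u2 + t * u1.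

Definition meets (Q S : R -> R -> Prop) : Prop := exists x y, Q x y /\ S x y.

(* Rescaling (x, y) to (x/a, y/b) turns the ellipse with semi-axes l*a, l*b
   into the disk of radius l.  A unit square has diameter sqrt 2, so after
   rescaling (both factors are at most 1/b) any two of its points are at
   distance at most 2/b; for b >= 200 this is far less than the gap 100/b
   between the radii of the nested ellipses. *)

From Stdlib Require Import Reals Lra Psatz.
Open Scope R_scope.

Definition ellipse_radius2 (a b x y : R) : R := (x / a) ^ 2 + (y / b) ^ 2.

Lemma ellipse_radius2_scale (l a b x y : R) : l <> 0 -> a <> 0 -> b <> 0 ->
  ellipse_radius2 a b x y = l ^ 2 * (x ^ 2 / (l * a) ^ 2 + y ^ 2 / (l * b) ^ 2).
Proof. intros; unfold ellipse_radius2; field; auto. Qed.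

Lemma ellipse_le_scaleE (l a b x y : R) : l <> 0 -> a <> 0 -> b <> 0 ->
  ellipse_le (l * a) (l * b) x y <-> ellipse_radius2 a b x y <= l ^ 2.
Proof.
  intros Hl Ha Hb; unfold ellipse_le.
  rewrite (ellipse_radius2_scale l) by assumption.
  assert (0 < l ^ 2) by (rewrite <- Rsqr_pow2; apply Rsqr_pos_lt, Hl).
  split; intro; nra.
Qed.

Lemma ellipse_ge_scaleE (l a b x y : R) : l <> 0 -> a <> 0 -> b <> 0 ->
  ellipse_ge (l * a) (l * b) x y <-> l ^ 2 <= ellipse_radius2 a b x y.
Proof.
  intros Hl Ha Hb; unfold ellipse_ge.
  rewrite (ellipse_radius2_scale l) by assumption.
  assert (0 < l ^ 2) by (rewrite <- Rsqr_pow2; apply Rsqr_pos_lt, Hl).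
  split; intro; nra.
Qed.

Lemma sqr_norm_add_le (p1 p2 d1 d2 r s : R) : 0 <= r -> 0 <= s ->
  p1 ^ 2 + p2 ^ 2 <= r ^ 2 -> d1 ^ 2 + d2 ^ 2 <= s ^ 2 ->
  (p1 + d1) ^ 2 + (p2 + d2) ^ 2 <= (r + s) ^ 2.
Proof.
  intros Hr Hs Hp Hd.
  assert (Hlagrange : (p1 ^ 2 + p2 ^ 2) * (d1 ^ 2 + d2 ^ 2)
                      = (p1 * d1 + p2 * d2) ^ 2 + (p1 * d2 - p2 * d1) ^ 2) by ring.
  assert (Hcs : p1 * d1 + p2 * d2 <= r * s).
  { pose proof (pow2_ge_0 (p1 * d2 - p2 * d1)).
    assert ((p1 * d1 + p2 * d2) ^ 2 <= (r * s) ^ 2) by nra.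
    assert (0 <= r * s) by (apply Rmult_le_pos; assumption).
    destruct (Rle_lt_dec (p1 * d1 + p2 * d2) (r * s)); [assumption | nra]. }
  nra.
Qed.

Lemma unit_square_sqr_dist_le (Q : R -> R -> Prop) (x y x' y' : R) :
  is_unit_square Q -> Q x y -> Q x' y' -> (x' - x) ^ 2 + (y' - y) ^ 2 <= 2.
Proof.
  intros [x0 [y0 [u1 [u2 [Hu HQ]]]]] H H'.
  apply HQ in H as [s [t [Hs [Ht [-> ->]]]]].
  apply HQ in H' as [s' [t' [Hs' [Ht' [-> ->]]]]].
  replace ((x0 + s' * u1 - t' * u2 - (x0 + s * u1 - t * u2)) ^ 2 +
           (y0 + s' * u2 + t' * u1 - (y0 + s * u2 + t * u1)) ^ 2)
    with (((s' - s) ^ 2 + (t' - t) ^ 2) * (u1 ^ 2 + u2 ^ 2)) by ring.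
  rewrite Hu; nra.
Qed.

Lemma sqr_scale_le (a b d : R) : 0 < b <= a -> (d / a) ^ 2 <= (d / b) ^ 2.
Proof.
  intros [Hb Hab].
  unfold Rdiv; rewrite !Rpow_mult_distr.
  apply Rmult_le_compat_l; [apply pow2_ge_0|].
  apply pow_incr; split.
  - left; apply Rinv_0_lt_compat; lra.
  - apply Rinv_le_contravar; lra.
Qed.

Lemma unit_square_radius_le (Q : R -> R -> Prop) (a b x y x' y' r : R) :
  0 < b <= a -> 0 <= r -> is_unit_square Q -> Q x y -> Q x' y' ->
  ellipse_radius2 a b x y <= r ^ 2 -> ellipse_radius2 a b x' y' <= (r + 2 / b) ^ 2.
Proof.
  intros Hab Hr HQ H H' Hxy; unfold ellipse_radius2 in *.
  assert (Hdist : ((x' - x) / a) ^ 2 + ((y' - y) / b) ^ 2 <= (2 / b) ^ 2).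
  { pose proof (unit_square_sqr_dist_le Q x y x' y' HQ H H').
    pose proof (sqr_scale_le a b (x' - x) Hab).
    assert (((x' - x) / b) ^ 2 + ((y' - y) / b) ^ 2
            = ((x' - x) ^ 2 + (y' - y) ^ 2) * (1 / b) ^ 2) by (field; lra).
    assert ((2 / b) ^ 2 = 4 * (1 / b) ^ 2) by (field; lra).
    pose proof (pow2_ge_0 (1 / b)); nra. }
  replace (x' / a) with (x / a + (x' - x) / a) by (field; lra).
  replace (y' / b) with (y / b + (y' - y) / b) by (field; lra).
  apply sqr_norm_add_le; auto.
  destruct Hab; apply Rlt_le, Rdiv_lt_0_compat; lra.
Qed.

Theorem lemmaA3 :
  exists C : R, forall a b : R, C <= b -> b <= a ->
    forall Q : R -> R -> Prop, is_unit_square Q ->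
      ~ (meets Q (ellipse_le a b) /\
         meets Q (ellipse_ge (a + 100 * (a / b)) (b + 100))) /\
      ~ (meets Q (ellipse_le (a - 100 * (a / b)) (b - 100)) /\
         meets Q (ellipse_ge a b)).
Proof.
  exists 200; intros a b Hb Hab Q HQ.
  assert (Hba : 0 < b <= a) by lra.
  assert (Hgap : 0 < 2 / b < 100 / b /\ 100 / b <= 1 / 2).
  { unfold Rdiv; assert (0 < / b <= / 200)
      by (split; [apply Rinv_0_lt_compat | apply Rinv_le_contravar]; lra).
    lra. }
  split; intros [[x [y [H Hin]]] [x' [y' [H' Hout]]]].
  - replace (a + 100 * (a / b)) with ((1 + 100 / b) * a) in Hout by (field; lra).
    replace (b + 100) with ((1 + 100 / b) * b) in Hout by (field; lra).
    rewrite <- (Rmult_1_l a), <- (Rmult_1_l b), ellipse_le_scaleE in Hin by lra.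
    rewrite ellipse_ge_scaleE in Hout by lra.
    pose proof (unit_square_radius_le Q a b x y x' y' 1 Hba ltac:(lra) HQ H H' Hin).
    nra.
  - replace (a - 100 * (a / b)) with ((1 - 100 / b) * a) in Hin by (field; lra).
    replace (b - 100) with ((1 - 100 / b) * b) in Hin by (field; lra).
    rewrite ellipse_le_scaleE in Hin by lra.
    rewrite <- (Rmult_1_l a), <- (Rmult_1_l b), ellipse_ge_scaleE in Hout by lra.
    pose proof (unit_square_radius_le Q a b x y x' y' (1 - 100 / b) Hba ltac:(lra) HQ H H' Hin).
    nra.
Qed.
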